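(* $\mathbf{E}[\lfloor r/2\rfloor] = 2/3 \pm O(1/i)$ and $\mathbf{E}[\lceil r/2 \rceil] = 4/3 \pm O(1/i)$.
   Context: In 2Merge$(A,B,T)$ with $T=(t_1,\dots,t_{i-2})$ sorted, $i$ even, $i\ge4$, after ensuring $A<B$, Step 2 compares $A$ with $t_{\lceil(1-2^{-r/2})i\rceil}$ for $r=1,2,\dots$ up to $2\lg i$ and stops at the first $r$ with $A<t_{\lceil(1-2^{-r/2})i\rceil}$; $r$ denotes this number of comparisons. The two inserted elements occupy uniformly random distinct positions among the $i$ positions, so given $A<B$, $\mathbf{Pr}[t_{\ell-1}<A<t_\ell]=(i-\ell)/\binom{i}{2}$; consequently $\mathbf{Pr}[r]=2^{-r}\pm O\!\left(\frac{1}{2^{r/2}i}\right)$. The expectations are over this distribution of $r$. *)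

From mathcomp Require Import all_boot all_order all_algebra.
From mathcomp Require Import all_classical all_reals all_analysis.
Set Implicit Arguments. Unset Strict Implicit. Unset Printing Implicit Defensive.
Import Order.TTheory GRing.Theory Num.Theory.
Local Open Scope ring_scope.

(* Index of the element of T compared with A in the r-th comparison of
   Step 2:  ceil((1 - 2^{-r/2}) i). *)
Definition probe_idx (R : realType) (i r : nat) : int :=
  Num.ceil ((1 - powR (2 : R) (- r%:R / 2)) * i%:R).

Definition rounds (R : realType) (i : nat) : seq nat :=
  [seq r <- iota 1 (2 * i) | (r%:R : R) <= 2 * (ln (i%:R : R) / ln 2)].

(* A lies in gap l of T, i.e. t_{l-1} < A < t_l (t_0 = -oo, t_{i-1} = +oo),
   for 1 <= l <= i-1.  Then A < t_c  iff  l <= c.  The number r of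
   comparisons is the first round r with A < t_{probe_idx i r}; if no
   round succeeds, all rounds have been performed. *)
Definition ncomp (R : realType) (i l : nat) : nat :=
  let s := rounds R i in
  nth (size s) s (find (fun r => (l%:Z <= probe_idx R i r)%R) s).

(* Pr[t_{l-1} < A < t_l] = (i - l) / binom(i,2) *)
Definition gap_prob (R : realType) (i l : nat) : R :=
  (i - l)%:R / 'C(i, 2)%:R.

Definition Er (R : realType) (i : nat) (f : nat -> R) : R :=
  \sum_(1 <= l < i) gap_prob R i l * f (ncomp R i l).

From mathcomp Require Import all_boot all_order all_algebra.
From mathcomp Require Import all_classical all_reals all_analysis.
From mathcomp Require Import zify ring lra.
Import Order.TTheory GRing.Theory Num.Theory.
Local Open Scope ring_scope.

(* Write q = 2^(-1/2).  Round k probes t_n with n = ceil((1 - q^k) i), so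
   r > k exactly when A lies above t_n, which has probability
   C(i - n, 2) / C(i, 2) = 2^-k +- 6 q^k / i because i - n = floor(q^k i).
   Since floor(r/2) and ceil(r/2) count the odd, resp. even, k < r, their
   expectations are sums over k of Pr[r > k] restricted to odd, resp. even, k.
   Replacing Pr[r > k] by 2^-k costs O(1/i) in total as sum q^k converges, and
   the truncated series sum 2^-k over odd (even) k < K differ from 2/3 (4/3)
   by at most 2^(1-K) <= 2/i, since the number K of rounds satisfies 2^K >= i. *)

Lemma filter_iota_downclosed (P : pred nat) a n :
  (forall x y, (x <= y)%N -> P y -> P x) ->
  [seq x <- iota a n | P x] = iota a (count P (iota a n)).
Proof.
move=> Pdown; elim: n a => [|n IH] a //=.
case: ifP => Pa; first by rewrite IH.
rewrite -size_filter; suff -> : [seq x <- iota a.+1 n | P x] = [::] by [].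
apply/eqP; rewrite -size_eq0 size_filter -leqn0 leqNgt -has_count.
apply/hasPn => x; rewrite mem_iota => /andP[ax _].
by apply: contraFN Pa; apply: Pdown; apply: ltnW.
Qed.

Lemma nth_find_iota_le (Q : pred nat) K :
  (nth K (iota 1 K) (find Q (iota 1 K)) <= K)%N.
Proof.
case: (ltnP (find Q (iota 1 K)) K) => [jK|Kj]; first by rewrite nth_iota.
by rewrite nth_default ?size_iota.
Qed.

Lemma ltn_nth_find_iota (Q : pred nat) K k :
  (forall a b, (a <= b)%N -> Q a -> Q b) -> ~~ Q 0%N -> (k < K)%N ->
  (k < nth K (iota 1 K) (find Q (iota 1 K)))%N = ~~ Q k.
Proof.
move=> Qup nQ0 kK; set j := find Q (iota 1 K).
have [jK|Kj] := ltnP j K; last first.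
  rewrite nth_default ?size_iota // kK; case: k kK => // k kK.
  have /hasPn nQ : ~~ has Q (iota 1 K) by rewrite has_find size_iota -leqNgt.
  by symmetry; apply: nQ; rewrite mem_iota; lia.
have Qj : Q j.+1.
  have := @nth_find _ 0%N Q (iota 1 K); rewrite has_find size_iota nth_iota //.
  by rewrite add1n; apply.
rewrite nth_iota // add1n ltnS; have [kj|jk] := leqP k j.
  case: k kj kK => // k kj kK.
  by have := before_find 0%N kj; rewrite nth_iota 1?add1n => [->|]; lia.
by rewrite (Qup _ _ jk Qj).
Qed.

Lemma sum_nat_gtn n i : (\sum_(0 <= l < i) (n < l) = i - n.+1)%N.
Proof.
elim: i => [|i IH]; first by rewrite big_geq.
by rewrite big_nat_recr //= IH; case: (ltnP n i); lia.
Qed.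

Lemma bin2_sum_gtn n i : (\sum_(0 <= l < i) (n < l) * (i - l) = 'C(i - n, 2))%N.
Proof.
elim: i => [|i IH]; first by rewrite big_geq.
rewrite big_nat_recr //= subSnn muln1.
rewrite (eq_big_nat _ _ (F2 := fun l => (n < l) * (i - l) + (n < l))%N); last first.
  by move=> l /andP[_ li]; rewrite (subSn (ltnW li)) mulnSr.
rewrite big_split /= IH sum_nat_gtn.
have [ni|in_] := ltnP n i; last by rewrite !bin_small; lia.
by rewrite (subSn (ltnW ni)) binS bin1; lia.
Qed.

Lemma half_sum_odd r : (r./2 = \sum_(0 <= k < r) odd k)%N.
Proof.
elim: r => [|r IH]; first by rewrite big_geq.
by rewrite big_nat_recr //= -IH uphalf_half addnC.
Qed.

Lemma uphalf_sum_even r : (uphalf r = \sum_(0 <= k < r) ~~ odd k)%N.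
Proof.
elim: r => [|r IH]; first by rewrite big_geq.
by rewrite big_nat_recr //= -IH uphalf_half; case: (odd r); rewrite /= ?addn1 ?addn0.
Qed.

Section RealAlgebra.
Variable R : realFieldType.

Lemma natr_bin2 a : 'C(a, 2)%:R = a%:R * (a%:R - 1) / 2 :> R.
Proof.
elim: a => [|a IH]; first by rewrite bin0n !mul0r.
by rewrite binS bin1 natrD IH -natr1; field.
Qed.

Lemma bin2_ratio_approx (I p m : R) :
  2 <= I -> 0 <= p <= 1 -> 0 <= m -> m <= p * I < m + 1 ->
  `| m * (m - 1) / (I * (I - 1)) - p ^+ 2 | <= 6 * p / I.
Proof.
move=> I2 /andP[p0 p1] m0 /andP[mx xm]; set x := p * I in mx xm *.
have D0 : 0 < I * I * (I - 1) by rewrite !mulr_gt0 //; lra.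
have -> : m * (m - 1) / (I * (I - 1)) - p ^+ 2 =
    (I * (m * (m - 1) - x ^+ 2) + x ^+ 2) / (I * I * (I - 1)).
  by rewrite /x; field; apply/andP; split; apply/negP => /eqP; lra.
have -> : 6 * p / I = 6 * x * (I - 1) / (I * I * (I - 1)).
  by rewrite /x; field; apply/andP; split; apply/negP => /eqP; lra.
have x0 : 0 <= x by rewrite /x mulr_ge0 //; lra.
have xI : x <= I by rewrite /x; nra.
clearbody x.
have lo : 0 <= x ^+ 2 - m * (m - 1).
  have : 0 <= (x - m) * (x + m) by apply: mulr_ge0; lra.
  by rewrite expr2; nra.
have hi : x ^+ 2 - m * (m - 1) <= 3 * x.
  have : 0 <= (m + 1 - x) * (x + m) by apply: mulr_ge0; lra.
  by rewrite expr2; nra.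
rewrite ler_norml -mulNr !ler_pM2r ?invr_gt0 //.
rewrite expr2 in lo hi *; apply/andP; split; nra.
Qed.

Lemma sum_geom_le (x : R) n :
  0 <= x < 1 -> \sum_(0 <= k < n) x ^+ k <= (1 - x)^-1.
Proof.
move=> /andP[x0 x1]; have := subrX1 x n; rewrite big_mkord.
have xn : 0 <= x ^+ n by apply: exprn_ge0.
by rewrite -div1r ler_pdivlMr; nra.
Qed.

Lemma sum_odd_geom_approx n :
  `|\sum_(0 <= k < n) (odd k)%:R * 2^-1 ^+ k - 2 / 3| <= 2 * 2^-1 ^+ n :> R.
Proof.
have -> : \sum_(0 <= k < n) (odd k)%:R * 2^-1 ^+ k =
    2 / 3 - (if odd n then 4 / 3 else 2 / 3) * 2^-1 ^+ n :> R.
  elim: n => [|n IH]; first by rewrite big_geq //= expr0 mulr1 subrr.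
  rewrite big_nat_recr //= IH exprS; set h := 2^-1 ^+ n.
  by case: (odd n); rewrite /= ?mul1r ?mul0r; lra.
have h0 : 0 <= 2^-1 ^+ n :> R by rewrite exprn_ge0.
by rewrite addrAC subrr add0r normrN ger0_norm; case: ifP; nra.
Qed.

Lemma sum_even_geom_approx n :
  `|\sum_(0 <= k < n) (~~ odd k)%:R * 2^-1 ^+ k - 4 / 3| <= 2 * 2^-1 ^+ n :> R.
Proof.
have -> : \sum_(0 <= k < n) (~~ odd k)%:R * 2^-1 ^+ k =
    4 / 3 - (if odd n then 2 / 3 else 4 / 3) * 2^-1 ^+ n :> R.
  elim: n => [|n IH]; first by rewrite big_geq //= expr0 mulr1 subrr.
  rewrite big_nat_recr //= IH exprS; set h := 2^-1 ^+ n.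
  by case: (odd n); rewrite /= ?mul1r ?mul0r; lra.
have h0 : 0 <= 2^-1 ^+ n :> R by rewrite exprn_ge0.
by rewrite addrAC subrr add0r normrN ger0_norm; case: ifP; nra.
Qed.

End RealAlgebra.

Section Probes.
Variable R : realType.

Definition rsqrt2 : R := powR 2 (- 2^-1).

Lemma rsqrt2_ge0 : 0 <= rsqrt2.
Proof. exact: powR_ge0. Qed.

Lemma powR2_neg_half k : powR (2 : R) (- k%:R / 2) = rsqrt2 ^+ k.
Proof. by rewrite -powR_mulrn ?powR_ge0 // -powRrM mulNr mulrC mulNr. Qed.

Lemma rsqrt2_sqr : rsqrt2 ^+ 2 = 2^-1.
Proof. by rewrite -powR2_neg_half (_ : - 2%:R / 2 = -1 :> R) ?powR_inv1 //; lra. Qed.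

Lemma rsqrt2_lt1 : rsqrt2 < 1.
Proof. by have := rsqrt2_sqr; have := rsqrt2_ge0; rewrite expr2; nra. Qed.

Lemma probe_idx0 i : probe_idx R i 0 = 0.
Proof. by rewrite /probe_idx powR2_neg_half expr0 subrr mul0r ceil0. Qed.

Lemma probe_idx_homo i a b : (a <= b)%N -> probe_idx R i a <= probe_idx R i b.
Proof.
move=> ab; rewrite /probe_idx !powR2_neg_half; apply/le_ceil/ler_wpM2r => //.
rewrite lerD2l lerN2 ler_wiXn2l // ?rsqrt2_ge0 //; exact: ltW rsqrt2_lt1.
Qed.

Lemma rounds_iota i : rounds R i = iota 1 (size (rounds R i)).
Proof.
rewrite /rounds size_filter; apply: filter_iota_downclosed => x y xy.
by apply: le_trans; rewrite ler_nat.
Qed.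

Lemma size_rounds_exp2 i : (2 <= i)%N -> (i <= 2 ^ size (rounds R i))%N.
Proof.
move=> i2; set t := trunc_log 2 i.
have ti : (2 ^ t <= i)%N by apply: trunc_logP; lia.
have it : (i < 2 ^ t.+1)%N by apply: trunc_log_ltn.
have t_rounds : t.+1 \in rounds R i.
  (* [2 ^ t.+1 <= 2 * i <= i ^ 2], i.e. [t.+1 <= 2 lg i]. *)
  rewrite /rounds mem_filter mem_iota; apply/andP; split; last first.
    by have := ltn_expl t (isT : (1 < 2)%N); lia.
  have ln2 : 0 < ln (2 : R) by apply: ln_gt0; lra.
  have i0 : (0 : R) < i%:R by rewrite ltr0n; lia.
  rewrite mulrA ler_pdivlMr // !mulr_natl -!lnXn // ler_ln ?posrE ?exprn_gt0 //.
  by rewrite -!natrX ler_nat expnS; nia.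
rewrite rounds_iota mem_iota in t_rounds.
by apply: (leq_trans (ltnW it)); rewrite leq_exp2l //; lia.
Qed.

Lemma ncomp_le_size i l : (ncomp R i l <= size (rounds R i))%N.
Proof. by rewrite /ncomp rounds_iota size_iota nth_find_iota_le. Qed.

Lemma ltn_ncomp i l k : (1 <= l)%N -> (k < size (rounds R i))%N ->
  (k < ncomp R i l)%N = (probe_idx R i k < l%:Z).
Proof.
move=> l1 kK; rewrite /ncomp rounds_iota size_iota ltn_nth_find_iota //.
- by rewrite -ltNge.
- by move=> a b ab /le_trans; apply; apply: probe_idx_homo.
- by rewrite probe_idx0 -ltNge ltz_nat.
Qed.

End Probes.

Section Expectation.
Variable R : realType.

Lemma Er_prefix_sum i (g : nat -> R) :
  @Er R i (fun r => \sum_(0 <= k < r) g k) =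
  \sum_(0 <= k < size (rounds R i)) g k * @Er R i (fun r => (k < r)%:R).
Proof.
rewrite /Er; symmetry; under eq_bigr do rewrite mulr_sumr.
rewrite exchange_big_nat; apply: eq_big_nat => l _; rewrite mulr_sumr.
rewrite (big_nat_widen _ _ _ _ _ (ncomp_le_size R i l)) [in RHS]big_mkcond /=.
by apply: eq_bigr => k _; case: ltnP; rewrite ?mulr1 ?mulr0 // mulrC.
Qed.

Lemma Er_ltn_bin2 i k (n : nat) :
  (k < size (rounds R i))%N -> probe_idx R i k = n%:Z ->
  @Er R i (fun r => (k < r)%:R) = 'C(i - n, 2)%:R / 'C(i, 2)%:R.
Proof.
move=> kK kn; rewrite /Er /gap_prob.
transitivity (\sum_(1 <= l < i) ((n < l) * (i - l))%N%:R / 'C(i, 2)%:R :> R).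
  apply: eq_big_nat => l /andP[l1 _]; rewrite ltn_ncomp // kn ltz_nat.
  by case: (n < l)%N; rewrite ?mul1n ?mul0n ?mulr1 ?mulr0 ?mul0r.
rewrite -mulr_suml -natr_sum -bin2_sum_gtn; case: i {kK kn} => [|i].
  by rewrite !big_geq.
by rewrite [in RHS]big_ltn.
Qed.

Lemma Er_ltn_approx i k : (2 <= i)%N -> (k < size (rounds R i))%N ->
  `|@Er R i (fun r => (k < r)%:R) - 2^-1 ^+ k| <= 6 * rsqrt2 R ^+ k / i%:R.
Proof.
move=> i2 kK; set p := rsqrt2 R ^+ k.
have p0 : 0 <= p by rewrite exprn_ge0 ?rsqrt2_ge0.
have p1 : p <= 1 by rewrite exprn_ile1 ?rsqrt2_ge0 // ltW ?rsqrt2_lt1.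
have I2 : (2 : R) <= i%:R by rewrite (ler_nat R 2 i).
have half_p : 2^-1 ^+ k = p ^+ 2 by rewrite -exprM mulnC exprM rsqrt2_sqr.
have probe_p : probe_idx R i k = Num.ceil (i%:R - p * i%:R).
  by rewrite /probe_idx powR2_neg_half mulrBl mul1r.
have [n kn] : exists n : nat, probe_idx R i k = n%:Z.
  by exists `|probe_idx R i k|%N; rewrite gez0_abs // probe_p ceil_ge0; nra.
(* [i - n] is [floor (p i)], the [m] of [bin2_ratio_approx]. *)
have := ceil_itv (i%:R - p * i%:R); rewrite -probe_p kn => /andP[n_lo n_hi].
rewrite rmorphB /= -!pmulrn in n_lo n_hi.
have ni : (n <= i)%N.
  by rewrite -lez_nat -kn probe_p ceil_le_int -pmulrn; nra.
rewrite (@Er_ltn_bin2 i k n kK kn) !natr_bin2 natrB // half_p.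
rewrite (_ : forall a : R, a / 2 / (i%:R * (i%:R - 1) / 2) = a / (i%:R * (i%:R - 1))).
  apply: bin2_ratio_approx; rewrite ?p0 ?p1 ?subr_ge0 ?ler_nat //.
  by apply/andP; split; lra.
by move=> a; field; apply/andP; split; apply/negP => /eqP; lra.
Qed.

Lemma Er_prefix_sum_approx i (g : nat -> R) : (2 <= i)%N ->
  (forall k, `|g k| <= 1) ->
  `|@Er R i (fun r => \sum_(0 <= k < r) g k) -
     \sum_(0 <= k < size (rounds R i)) g k * 2^-1 ^+ k|
    <= 6 * (1 - rsqrt2 R)^-1 / i%:R.
Proof.
move=> i2 g1; rewrite Er_prefix_sum -sumrB.
under eq_bigr do rewrite -mulrBr.
apply: le_trans (ler_norm_sum _ _ _) _.
apply: (@le_trans _ _ (\sum_(0 <= k < size (rounds R i)) 6 / i%:R * rsqrt2 R ^+ k)).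
  apply: ler_sum_nat => k /andP[_ kK]; rewrite normrM mulrAC -[leRHS]mul1r.
  by apply: ler_pM; rewrite ?normr_ge0 ?g1 ?Er_ltn_approx.
rewrite -mulr_sumr mulrAC; apply: ler_wpM2r; first by rewrite invr_ge0.
apply: ler_wpM2l => //; apply: sum_geom_le; by rewrite rsqrt2_ge0 rsqrt2_lt1.
Qed.

Lemma Er_prefix_sum_near i (g : nat -> R) (T : R) : (2 <= i)%N ->
  (forall k, `|g k| <= 1) ->
  (forall n, `|\sum_(0 <= k < n) g k * 2^-1 ^+ k - T| <= 2 * 2^-1 ^+ n) ->
  `|@Er R i (fun r => \sum_(0 <= k < r) g k) - T|
    <= (6 * (1 - rsqrt2 R)^-1 + 2) / i%:R.
Proof.
move=> i2 g1 gT; set K := size (rounds R i).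
have tail : 2 * 2^-1 ^+ K <= 2 / i%:R :> R.
  rewrite ler_pM2l // exprVn lef_pV2 ?posrE ?exprn_gt0 ?ltr0n //; last by lia.
  by rewrite -natrX ler_nat size_rounds_exp2.
rewrite -(subrK (\sum_(0 <= k < K) g k * 2^-1 ^+ k) (Er _ _)) -addrA mulrDl.
apply: le_trans (ler_normD _ _) _; apply: lerD.
  exact: Er_prefix_sum_approx.
exact: le_trans (gT K) tail.
Qed.

End Expectation.

Theorem lemma3 (R : realType) :
  exists C : R, forall i : nat, ~~ odd i -> (4 <= i)%N ->
    `| @Er R i (fun r => (r./2)%:R) - 2 / 3 | <= C / i%:R /\
    `| @Er R i (fun r => (uphalf r)%:R) - 4 / 3 | <= C / i%:R.
Proof.
exists (6 * (1 - rsqrt2 R)^-1 + 2) => i _ i4.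
have i2 : (2 <= i)%N by lia.
have indicator_le1 (b : bool) : `|b%:R : R| <= 1 by rewrite normr_nat lern1 leq_b1.
split.
- rewrite (_ : (fun r => _) = fun r => \sum_(0 <= k < r) (odd k)%:R).
    exact: Er_prefix_sum_near i2 (fun k => indicator_le1 _) (sum_odd_geom_approx R).
  by apply: funext => r; rewrite half_sum_odd natr_sum.
- rewrite (_ : (fun r => _) = fun r => \sum_(0 <= k < r) (~~ odd k)%:R).
    exact: Er_prefix_sum_near i2 (fun k => indicator_le1 _) (sum_even_geom_approx R).
  by apply: funext => r; rewrite uphalf_sum_even natr_sum.
Qed.
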